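(* Let $X=\{a,b\}$ with $a\ne b$, and consider the commutative unital ring $(\mathcal{P}(X),\Delta,\cap)$, where addition is symmetric difference $B\Delta C=(B\cap C^c)\cup(C\cap B^c)$ (zero $\emptyset$) and multiplication is intersection (unit $X$). The irreducible $\lambda$-quiddities over this ring are exactly, up to cyclic permutation: - $(X,X,X)$; - $(\{a\},\{b\},\{a\},\{b\})$, $(\emptyset,\emptyset,\emptyset,\emptyset)$, $(\{a\},\emptyset,\{a\},\emptyset)$, $(\{b\},\emptyset,\{b\},\emptyset)$; - $(\{a\},\{a\},\{a\},\{a\},\{a\},\{a\})$ and $(\{b\},\{b\},\{b\},\{b\},\{b\},\{b\})$.
   Context: For $a_1,\ldots,a_n$ in a commutative unital ring $A$ (with unit $1$), $M_n(a_1,\ldots,a_n)=\begin{pmatrix}a_n&-1\\1&0\end{pmatrix}\cdots\begin{pmatrix}a_1&-1\\1&0\end{pmatrix}$. An $n$-tuple $(a_1,\ldots,a_n)\in A^n$ is a $\lambda$-quiddity over $A$ if $M_n(a_1,\ldots,a_n)=\pm\mathrm{Id}$. For $(a_1,\ldots,a_n)\in A^n$, $(b_1,\ldots,b_m)\in A^m$, define $(a_1,\ldots,a_n)\oplus(b_1,\ldots,b_m)=(a_1+b_m,a_2,\ldots,a_{n-1},a_n+b_1,b_2,\ldots,b_{m-1})$. Write $(a_1,\ldots,a_n)\sim(b_1,\ldots,b_n)$ if $(b_1,\ldots,b_n)$ is obtained from $(a_1,\ldots,a_n)$ or from $(a_n,\ldots,a_1)$ by a cyclic permutation. A $\lambda$-quiddity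 $(c_1,\ldots,c_n)$ with $n\ge3$ is reducible if there exist a $\lambda$-quiddity $(b_1,\ldots,b_l)$ and a tuple $(a_1,\ldots,a_m)$ with $l,m\ge3$ and $(c_1,\ldots,c_n)\sim(a_1,\ldots,a_m)\oplus(b_1,\ldots,b_l)$; it is irreducible otherwise (by convention $(0,0)$ is reducible). *)

From HB Require Import structures.
From mathcomp Require Import all_boot all_order all_algebra.
Set Implicit Arguments. Unset Strict Implicit. Unset Printing Implicit Defensive.
Import GRing.Theory.
Local Open Scope ring_scope.

Section Quiddity.
Variable R : comNzRingType.

Definition qmat (a : R) : 'M[R]_2 :=
  \matrix_(i < 2, j < 2)
    (if (i == 0 :> nat) then (if (j == 0 :> nat) then a else -1)
     else (if (j == 0 :> nat) then 1 else 0)).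

Definition Mn (s : seq R) : 'M[R]_2 := foldl (fun M a => qmat a *m M) 1%:M s.

Definition lambda_quiddity (s : seq R) : Prop :=
  Mn s = 1%:M \/ Mn s = - 1%:M.

(* (a_1..a_n) (+) (b_1..b_m) = (a_1+b_m, a_2..a_{n-1}, a_n+b_1, b_2..b_{m-1}) *)
Definition oplus (a b : seq R) : seq R :=
  let n := size a in let m := size b in
  [:: a`_0 + b`_(m.-1)] ++ take (n - 2) (drop 1 a) ++
  [:: a`_(n.-1) + b`_0] ++ take (m - 2) (drop 1 b).

Definition qsim (c d : seq R) : Prop :=
  exists k, d = rot k c \/ d = rot k (rev c).

Definition reducible (c : seq R) : Prop :=
  lambda_quiddity c /\ (3 <= size c)%N /\
  exists a b : seq R, [/\ (3 <= size a)%N, (3 <= size b)%N, lambda_quiddity b &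
                          qsim c (oplus a b)].

(* irreducible lambda-quiddities: size >= 3 (sizes 1 admit no quiddity,
   the only size-2 quiddity (0,0) is reducible by convention) *)
Definition irreducible (c : seq R) : Prop :=
  lambda_quiddity c /\ (3 <= size c)%N /\ ~ reducible c.
End Quiddity.

(* X is modelled by bool, with a := true and b := false. *)
Definition PX := {set bool}.
HB.instance Definition _ := Finite.on PX.

Definition symdiff (B C : PX) : PX := (B :&: ~: C) :|: (C :&: ~: B).
Definition PX0 : PX := set0.
Definition PXopp (B : PX) : PX := B.

Lemma symdiffA : associative symdiff.
Proof. move=> A B C; apply/setP=> x; rewrite !inE.
by case: (x \in A); case: (x \in B); case: (x \in C). Qed.
Lemma symdiffC : commutative symdiff.
Proof. move=> A B; apply/setP=> x; rewrite !inE.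
by case: (x \in A); case: (x \in B). Qed.
Lemma symdiff0 : left_id PX0 symdiff.
Proof. move=> A; apply/setP=> x; rewrite !inE; by case: (x \in A). Qed.
Lemma symdiffN : left_inverse PX0 PXopp symdiff.
Proof. move=> A; apply/setP=> x; rewrite !inE; by case: (x \in A). Qed.

HB.instance Definition _ :=
  GRing.isZmodule.Build PX symdiffA symdiffC symdiff0 symdiffN.

Definition PX1 : PX := setT.
Definition PXmul (B C : PX) : PX := B :&: C.
Lemma PXmulA : associative PXmul.
Proof. by move=> A B C; rewrite /PXmul setIA. Qed.
Lemma PXmulC : commutative PXmul.
Proof. by move=> A B; rewrite /PXmul setIC. Qed.
Lemma PXmul1 : left_id PX1 PXmul.
Proof. by move=> A; rewrite /PXmul setTI. Qed.
Lemma PXmulDl : left_distributive PXmul (@GRing.add PX).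
Proof. move=> A B C; apply/setP=> x; rewrite /PXmul /= /symdiff !inE.
by case: (x \in A); case: (x \in B); case: (x \in C). Qed.
Lemma PX1_neq0 : PX1 != 0 :> PX.
Proof. by apply/eqP=> /setP /(_ true); rewrite !inE. Qed.

HB.instance Definition _ :=
  GRing.Zmodule_isComNzRing.Build PX PXmulA PXmulC PXmul1 PXmulDl PX1_neq0.

Definition sa : PX := [set true].
Definition sb : PX := [set false].
Definition sX : PX := setT.
Definition sE : PX := set0.

Lemma PX_addE (B C : PX) : B + C = (B :&: ~: C) :|: (C :&: ~: B). Proof. by []. Qed.
Lemma PX_mulE (B C : PX) : B * C = B :&: C. Proof. by []. Qed.
Lemma PX_oneE : 1 = sX. Proof. by []. Qed.
Lemma PX_zeroE : 0 = sE. Proof. by []. Qed.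

(* P({a,b}) is F_2 x F_2, so quiddities of a given length can be enumerated by
   computation, and -1 = 1.  A quiddity c of length >= 4 is reducible as soon as it
   contains X = 1 (glue (1,1,1) onto it) and, when its length is >= 5, as soon as two
   adjacent entries have empty intersection u v = 0 (glue (v,u,v,u)).  What survives
   in length >= 5 is a constant tuple ({a}^n or {b}^n): {a}^5 is not a quiddity, {a}^6
   is, and {a}^n is reducible for n >= 7 by gluing {a}^6.  Conversely, the interior
   entries of any summand b in c ~ a (+) b occur in c, and no quiddity shorter than a
   listed tuple has its interior entries among the entries of that tuple. *)

From mathcomp Require Import all_boot all_order all_algebra zify ring.
Set Implicit Arguments. Unset Strict Implicit. Unset Printing Implicit Defensive.
Import GRing.Theory.
Local Open Scope ring_scope.

Definition interior (T : Type) (s : seq T) : seq T := take (size s - 2) (drop 1 s).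

Lemma map_interior (T U : Type) (f : T -> U) (s : seq T) :
  map f (interior s) = interior (map f s).
Proof. by rewrite /interior map_take map_drop size_map. Qed.

Section Quiddity.
Variable R : comNzRingType.
Implicit Types (a b c p q s t w : seq R) (u v x y z : R).

Lemma Mn_cat s t : Mn (s ++ t) = Mn t *m Mn s.
Proof.
have foldl_qmat (M : 'M[R]_2) w : foldl (fun M (a : R) => qmat a *m M) M w = Mn w *m M.
  elim: w M => [|x w IHw] M /=; first by rewrite mul1mx.
  by rewrite /Mn /= !IHw mulmx1 mulmxA.
by rewrite /Mn foldl_cat foldl_qmat.
Qed.

Lemma lambda_quiddity_rot k c : lambda_quiddity c -> lambda_quiddity (rot k c).
Proof.
rewrite /lambda_quiddity /rot Mn_cat -[in Mn c](cat_take_drop k c) Mn_cat.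
case=> [/mulmx1C -> | /(congr1 -%R)]; first by left.
rewrite opprK -mulNmx => /mulmx1C; rewrite mulmxN => /(congr1 -%R).
by rewrite opprK; right.
Qed.

Definition mx2 (x : R * R * R * R) : 'M[R]_2 :=
  let '(p, q, r, t) := x in
  \matrix_(i < 2, j < 2)
    (if (i == 0 :> nat) then (if (j == 0 :> nat) then p else q)
     else (if (j == 0 :> nat) then r else t)).

Definition qstep (x : R * R * R * R) (a : R) : R * R * R * R :=
  let '(p, q, r, t) := x in (a * p - r, a * q - t, p, q).

Lemma qmat_mx2 (a : R) (x : R * R * R * R) : qmat a *m mx2 x = mx2 (qstep x a).
Proof.
case: x => [[[p q] r] t]; apply/matrixP => i j.
rewrite !mxE !big_ord_recl big_ord0 !mxE /=.
case: i => [[|[|i]] Hi] //; case: j => [[|[|j]] Hj] //=;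
  by rewrite ?mul1r ?mul0r ?addr0 ?mulN1r.
Qed.

Lemma mx2_inj : injective mx2.
Proof.
move=> [[[p q] r] t] [[[p' q'] r'] t'] /matrixP eq_mx.
have := eq_mx ord0 ord0; have := eq_mx ord0 ord_max.
have := eq_mx ord_max ord0; have := eq_mx ord_max ord_max.
by rewrite !mxE /= => -> -> -> ->.
Qed.

Lemma mx2_scalar u : u%:M = mx2 (u, 0, 0, u).
Proof.
apply/matrixP => i j; rewrite !mxE.
by case: i => [[|[|i]] Hi] //; case: j => [[|[|j]] Hj].
Qed.

Lemma lambda_quiddityE s : lambda_quiddity s <->
  foldl qstep (1, 0, 0, 1) s = (1, 0, 0, 1) \/
  foldl qstep (1, 0, 0, 1) s = (-1, 0, 0, -1).
Proof.
have Mn_mx2 : Mn s = mx2 (foldl qstep (1, 0, 0, 1) s).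
  rewrite /Mn mx2_scalar; elim: s (1, 0, 0, 1) => [|a s IHs] e //=.
  by rewrite qmat_mx2 IHs.
rewrite /lambda_quiddity Mn_mx2.
have -> : - 1%:M = (-1)%:M :> 'M[R]_2.
  by apply/matrixP => i j; rewrite !mxE mulNrn.
rewrite !mx2_scalar.
by split=> -[] E; [left | right | left | right]; rewrite ?E ?(mx2_inj E).
Qed.

Lemma size_oplus a b : (2 <= size a)%N -> (2 <= size b)%N ->
  size (oplus a b) = (size a + size b - 2)%N.
Proof.
move=> a2 b2; rewrite /oplus /= !size_cat /= !size_take !size_drop.
by do 2 case: ifP; lia.
Qed.

Lemma oplus_interior a b : exists p, oplus a b = p ++ interior b.
Proof. by eexists; rewrite /oplus !catA. Qed.

Lemma reducible_interior c : reducible c ->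
  exists2 b, lambda_quiddity b /\ (3 <= size b < size c)%N & {subset interior b <= c}.
Proof.
case=> _ [_ [a [b [a3 b3 qb [k Ec]]]]].
have size_c : size c = size (oplus a b) by case: Ec => ->; rewrite size_rot ?size_rev.
exists b; first by split; rewrite // b3 size_c size_oplus ?(ltnW a3) ?(ltnW b3); lia.
have [p Eo] := oplus_interior a b.
move=> x x_in; have : x \in oplus a b by rewrite Eo mem_cat x_in orbT.
by case: Ec => ->; rewrite mem_rot ?mem_rev.
Qed.

Lemma reducible_rot_cat_interior c k w b :
  lambda_quiddity c -> lambda_quiddity b -> (3 <= size b)%N -> (3 <= size w)%N ->
  rot k c = w ++ interior b -> reducible c.
Proof.
move=> qc qb b3 w3 Ec.
have c3 : (3 <= size c)%N by rewrite -(size_rot k) Ec size_cat (leq_trans w3) ?leq_addr.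
split=> //; split=> //.
case: w w3 Ec => [|x w] //=; case/lastP: w => [|m y] //; rewrite size_rcons ltnS => m1 Ec.
(* a := (x - b_m, m, y - b_1) is built so that a (+) b = rot k c. *)
exists ((x - b`_(size b).-1) :: rcons m (y - b`_0)), b.
split=> //; first by rewrite /= size_rcons !ltnS.
exists k; left; rewrite Ec /oplus /= size_rcons subrK.
rewrite subn2 /= drop0 -cats1 take_size_cat //= nth_cat ltnn subnn /= subrK.
by rewrite cat_rcons.
Qed.

Lemma reducible_cat_interior c p q b :
  lambda_quiddity c -> lambda_quiddity b -> (3 <= size b)%N ->
  (size (interior b) + 3 <= size c)%N -> c = p ++ interior b ++ q -> reducible c.
Proof.
move=> qc qb b3 c_big Ec.
apply: (reducible_rot_cat_interior (k := size (p ++ interior b)) (w := q ++ p)) qc qb b3 _ _.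
  by move: c_big; rewrite Ec !size_cat; lia.
by rewrite Ec catA rot_size_cat catA.
Qed.

Lemma lambda_quiddity_111 : lambda_quiddity [:: 1; 1; 1 : R].
Proof. by apply/lambda_quiddityE; right; cbv [foldl qstep]; congr (_, _, _, _); ring. Qed.

Lemma reducible_of_mem1 c : lambda_quiddity c -> (4 <= size c)%N -> 1 \in c -> reducible c.
Proof.
move=> qc c4 /splitPr c_split; case: c_split qc c4 => p q qc c4.
exact: (reducible_cat_interior (b := [:: 1; 1; 1]) (p := p) (q := q) qc lambda_quiddity_111).
Qed.

Lemma reducible_nseq m n z : (3 <= m < n)%N ->
  lambda_quiddity (nseq m z) -> lambda_quiddity (nseq n z) -> reducible (nseq n z).
Proof.
move=> /andP[m3 mn] qm qn.
have int_m : interior (nseq m z) = nseq (m - 2) z.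
  by rewrite /interior size_nseq drop_nseq take_nseq //; lia.
apply: (reducible_cat_interior (p := [::]) (q := nseq (n - (m - 2)) z) qn qm).
- by rewrite size_nseq.
- by rewrite int_m !size_nseq; lia.
- by rewrite int_m -nseqD; congr (nseq _ _); lia.
Qed.

Section CharacteristicTwo.
Hypothesis R_char2 : 2 \in [pchar R].

(* With u v = 0 one finds M(v,u,v,u) = [[1, 2u], [-2v, 1]]. *)
Lemma lambda_quiddity_pair u v : u * v = 0 -> lambda_quiddity [:: v; u; v; u].
Proof.
move=> uv0; have u2 : u *+ 2 = 0 by rewrite mulr2n addrr_pchar2.
have v2 : v *+ 2 = 0 by rewrite mulr2n addrr_pchar2.
apply/lambda_quiddityE; left; cbv [foldl qstep]; rewrite !(oppr_pchar2 R_char2).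
by congr (_, _, _, _); ring: uv0 u2 v2.
Qed.

Lemma reducible_of_adjacent_mul0 c i : lambda_quiddity c -> (5 <= size c)%N ->
  (i.+1 < size c)%N -> c`_i * c`_i.+1 = 0 -> reducible c.
Proof.
move=> qc c5 ic prod0.
apply: (reducible_cat_interior (b := [:: c`_i.+1; c`_i; c`_i.+1; c`_i]) (p := take i c)
  (q := drop i.+2 c) qc (lambda_quiddity_pair prod0)) => //.
by rewrite -{1}(cat_take_drop i.+2 c) (take_nth 0 ic) (take_nth 0 (ltnW ic)) -!cats1 -!catA.
Qed.
End CharacteristicTwo.
End Quiddity.

(* [chi] identifies P({a,b}) with F_2 x F_2 (a is [true], b is [false]); over the
   latter, quiddities of bounded length are decided by computation. *)
Definition chi (B : PX) : bool * bool := (true \in B, false \in B).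

Definition of_chi (p : bool * bool) : PX :=
  match p with
  | (true, true) => sX | (true, false) => sa | (false, true) => sb | (false, false) => sE
  end.

Lemma of_chiK : cancel of_chi chi.
Proof. by case=> [[] []]; rewrite /chi /= ?inE. Qed.

Lemma chi_inj : injective chi.
Proof. by move=> B C [eq_true eq_false]; apply/setP => -[]. Qed.

Lemma chiK : cancel chi of_chi.
Proof. by move=> B; apply: chi_inj; rewrite of_chiK. Qed.

Definition addb2 (p q : bool * bool) := (p.1 (+) q.1, p.2 (+) q.2).
Definition mulb2 (p q : bool * bool) := (p.1 && q.1, p.2 && q.2).

Lemma chiD B C : chi (B + C) = addb2 (chi B) (chi C).
Proof.
rewrite /chi /addb2 PX_addE /= !inE.
by case: (true \in B); case: (true \in C); case: (false \in B); case: (false \in C).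
Qed.

Lemma chiM B C : chi (B * C) = mulb2 (chi B) (chi C).
Proof. by rewrite /chi /mulb2 PX_mulE /= !inE. Qed.

Lemma chi0 : chi 0 = (false, false). Proof. exact: (of_chiK (false, false)). Qed.
Lemma chi1 : chi 1 = (true, true). Proof. exact: (of_chiK (true, true)). Qed.

Lemma PX_pchar2 : 2 \in [pchar PX].
Proof. by apply/andP; split=> //; apply/eqP/chi_inj; rewrite mulr2n chiD chi1 chi0. Qed.

Definition qstepb (x : (bool * bool) * (bool * bool) * (bool * bool) * (bool * bool))
    (a : bool * bool) :=
  let '(p, q, r, t) := x in (addb2 (mulb2 a p) r, addb2 (mulb2 a q) t, p, q).

Definition quiddityb (e : seq (bool * bool)) : bool :=
  let id := ((true, true), (false, false), (false, false), (true, true)) in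
  foldl qstepb id e == id.

Lemma PX_lambda_quiddityE s : lambda_quiddity s <-> quiddityb (map chi s).
Proof.
pose chi4 (x : PX * PX * PX * PX) := let '(p, q, r, t) := x in (chi p, chi q, chi r, chi t).
have chi4_inj : injective chi4.
  apply: (can_inj (g := fun '(p, q, r, t) => (of_chi p, of_chi q, of_chi r, of_chi t))).
  by case=> [[[p q] r] t]; cbn -[chi of_chi]; rewrite !chiK.
have chi4_foldl x : chi4 (foldl (@qstep _) x s) = foldl qstepb (chi4 x) (map chi s).
  elim: s x => [|a s IHs] [[[p q] r] t] //=.
  by rewrite IHs /= !chiD !(oppr_pchar2 PX_pchar2) !chiM.
rewrite lambda_quiddityE /quiddityb !(oppr_pchar2 PX_pchar2).
have -> : ((true, true), (false, false), (false, false), (true, true)) = chi4 (1, 0, 0, 1).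
  by rewrite /= chi0 chi1.
rewrite -chi4_foldl (inj_eq chi4_inj).
by split=> [[] /eqP | /eqP]; last left.
Qed.

Fixpoint tuplesb n : seq (seq (bool * bool)) :=
  if n is n'.+1 then
    [seq p :: e | p <- [:: (true, true); (true, false); (false, true); (false, false)],
                  e <- tuplesb n']
  else [:: [::]].

Lemma tuplesb_size (e : seq (bool * bool)) : e \in tuplesb (size e).
Proof.
elim: e => [|p e IHe] //=.
by case: p => [[] []]; rewrite !mem_cat (map_f (cons _) IHe) ?orbT.
Qed.

Lemma all_tuplesbP n (P : pred (seq (bool * bool))) s :
  all P (tuplesb n) -> size s = n -> P (map chi s).
Proof. by move=> /allP Pn sn; apply: Pn; rewrite -sn -(size_map chi) tuplesb_size. Qed.

Definition irreduciblesb : seq (seq (bool * bool)) :=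
  [:: [:: (true, true); (true, true); (true, true)];
      [:: (true, false); (false, true); (true, false); (false, true)];
      [:: (false, false); (false, false); (false, false); (false, false)];
      [:: (true, false); (false, false); (true, false); (false, false)];
      [:: (false, true); (false, false); (false, true); (false, false)];
      nseq 6 (true, false); nseq 6 (false, true)].

Definition PX_irreducibles : seq (seq PX) := map (map of_chi) irreduciblesb.

Definition rot_irreducibleb (e : seq (bool * bool)) : bool :=
  has (fun t => has (fun k => e == rot k t) (iota 0 (size t))) irreduciblesb.

Lemma rot_irreducibleP s : rot_irreducibleb (map chi s) ->
  exists2 t, t \in PX_irreducibles & exists k, s = rot k t.
Proof.
case/hasP => e e_in /hasP [k _ /eqP E].
exists (map of_chi e); first exact: map_f.
by exists k; rewrite -map_rot -E (mapK chiK).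
Qed.

Lemma PX_quiddity3 c : size c = 3 -> lambda_quiddity c ->
  exists2 t, t \in PX_irreducibles & exists k, c = rot k t.
Proof.
have check : all (fun e => quiddityb e ==> rot_irreducibleb e) (tuplesb 3) by vm_compute.
move=> c3 /PX_lambda_quiddityE qc; apply: rot_irreducibleP.
by move: (all_tuplesbP check c3); rewrite qc.
Qed.

Lemma PX_quiddity4 c : size c = 4 -> lambda_quiddity c -> sX \notin c ->
  exists2 t, t \in PX_irreducibles & exists k, c = rot k t.
Proof.
have check : all (fun e => quiddityb e ==> ((true, true) \notin e) ==> rot_irreducibleb e)
  (tuplesb 4) by vm_compute.
move=> c4 /PX_lambda_quiddityE qc Xc; apply: rot_irreducibleP.
move: (all_tuplesbP check c4); rewrite qc -(of_chiK (true, true)) (mem_map chi_inj).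
by rewrite Xc.
Qed.

Lemma PX_irreducibles_quiddity t : t \in PX_irreducibles -> lambda_quiddity t.
Proof.
have check : all quiddityb irreduciblesb by vm_compute.
by case/mapP => e e_in ->; apply/PX_lambda_quiddityE; rewrite (mapK of_chiK) (allP check).
Qed.

Lemma PX_irreducibles_interior t b : t \in PX_irreducibles -> lambda_quiddity b ->
  (3 <= size b < size t)%N -> ~ {subset interior b <= t}.
Proof.
have check : all (fun e => all (fun n => all (fun f => quiddityb f ==>
    ~~ all (mem e) (interior f)) (tuplesb n)) (iota 3 (size e - 3))) irreduciblesb.
  by vm_compute.
case/mapP => e e_in -> /PX_lambda_quiddityE qb; rewrite size_map => b_size sub_b.
have b_in : size b \in iota 3 (size e - 3).
  by rewrite mem_iota subnKC //; case/andP: b_size => b3 /(ltn_trans b3).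
have /implyP/(_ qb) := all_tuplesbP (allP (allP check e e_in) _ b_in) (erefl (size b)).
apply/negP/negPn/allP => p; rewrite -map_interior => /mapP [x /sub_b x_in ->].
by rewrite -(mem_map chi_inj) (mapK of_chiK) in x_in.
Qed.

Lemma PX_nseq5 z : z = sa \/ z = sb -> ~ lambda_quiddity (nseq 5 z).
Proof.
move=> z_ab /PX_lambda_quiddityE; rewrite map_nseq.
by case: z_ab => ->; [rewrite (of_chiK (true, false)) | rewrite (of_chiK (false, true))].
Qed.

Lemma PX_mul_neq0 u v : u * v != 0 -> u != sX -> v != sX -> u = v /\ (u = sa \/ u = sb).
Proof.
rewrite -PX_oneE -!(inj_eq chi_inj) chiM chi0 chi1.
move: (chiK u) (chiK v); case: (chi u) (chi v) => [[] []] [[] []] <- <- //=; by auto.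
Qed.

Lemma PX_adjacent_const c : (2 <= size c)%N -> sX \notin c ->
  (forall i, (i.+1 < size c)%N -> c`_i * c`_i.+1 != 0) ->
  exists2 z, z = sa \/ z = sb & c = nseq (size c) z.
Proof.
move=> c2 Xc adj_neq0.
have nth_neqX i : (i < size c)%N -> c`_i != sX.
  by move=> ic; apply: contraNneq Xc => <-; apply: mem_nth.
have nth_c0 i : (i < size c)%N -> c`_i = c`_0.
  elim: i => [|i IHi] ic //; rewrite -IHi ?(ltnW ic) //.
  by case: (PX_mul_neq0 (adj_neq0 i ic) (nth_neqX _ (ltnW ic)) (nth_neqX _ ic)).
exists c`_0; first by case: (PX_mul_neq0 (adj_neq0 0%N c2) (nth_neqX _ (ltnW c2)) (nth_neqX _ c2)).
apply: (eq_from_nth (x0 := 0)); first by rewrite size_nseq.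
by move=> i ic; rewrite nth_nseq ic nth_c0.
Qed.

Lemma nseq6_irreducible z : z = sa \/ z = sb -> nseq 6 z \in PX_irreducibles.
Proof.
case=> ->; [apply: (map_f _ (x := nseq 6 (true, false))) |
            apply: (map_f _ (x := nseq 6 (false, true)))]; by [].
Qed.

Lemma PX_irreducible_listed t k : t \in PX_irreducibles -> irreducible (rot k t).
Proof.
move=> t_in; split; first exact/lambda_quiddity_rot/PX_irreducibles_quiddity.
split.
  rewrite size_rot; case/mapP: t_in => e e_in ->; rewrite size_map.
  by move: e e_in; apply/allP.
case/reducible_interior => b [qb]; rewrite size_rot => b_size sub_b.
by apply: (PX_irreducibles_interior t_in qb b_size) => x /sub_b; rewrite mem_rot.
Qed.

Theorem proposition3p6 (c : seq PX) :
  irreducible c <->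
  exists2 t, t \in [:: [:: sX; sX; sX];
                       [:: sa; sb; sa; sb];
                       [:: sE; sE; sE; sE];
                       [:: sa; sE; sa; sE];
                       [:: sb; sE; sb; sE];
                       [:: sa; sa; sa; sa; sa; sa];
                       [:: sb; sb; sb; sb; sb; sb]]
  & exists k, c = rot k t.
Proof.
split=> [[qc [c3 c_irr]] | [t t_in [k ->]]]; last exact: PX_irreducible_listed.
have [c_eq3 | c_ne3] := eqVneq (size c) 3; first exact: PX_quiddity3.
have c4 : (4 <= size c)%N by rewrite ltn_neqAle eq_sym c_ne3.
have Xc : sX \notin c.
  by apply/negP => X_in; apply/c_irr/reducible_of_mem1; rewrite ?PX_oneE.
have [c_eq4 | c_ne4] := eqVneq (size c) 4; first exact: PX_quiddity4.
have c5 : (5 <= size c)%N by rewrite ltn_neqAle eq_sym c_ne4.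
have adj_neq0 i : (i.+1 < size c)%N -> c`_i * c`_i.+1 != 0.
  move=> ic; apply/eqP => prod0; apply: c_irr.
  exact: (reducible_of_adjacent_mul0 PX_pchar2 qc c5 ic prod0).
set n := size c in c5 adj_neq0 *.
have [z z_ab] := PX_adjacent_const (ltnW c3) Xc adj_neq0; rewrite -/n => c_def.
clearbody n; subst c.
have q6 := PX_irreducibles_quiddity (nseq6_irreducible z_ab).
have [n_eq6 | n_ne6] := eqVneq n 6.
  by exists (nseq 6 z); [exact: nseq6_irreducible | exists 0%N; rewrite n_eq6 rot0].
have [n_eq5 | n_ne5] := eqVneq n 5; first by subst n; case: (PX_nseq5 z_ab qc).
by case: c_irr; apply: (reducible_nseq (m := 6)) => //; lia.
Qed.
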